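(* Let $\kappa$ be an uncountable regular cardinal and let $\mathcal{I}$ be a $\kappa$-complete proper ideal on $\kappa$ containing every bounded subset of $\kappa$, and suppose $\mathcal{I}$ contains an unbounded subset of $\kappa$. Let $\nu\in\{2,\kappa\}$. Then: (1) every nonempty $A\subseteq{}^{\kappa}\nu$ is an $\mathcal{I}$-continuous image of ${}^{\kappa}\kappa$; (2) every $A\subseteq{}^{\kappa}\nu$ is an injective $\mathcal{I}$-continuous image of some $\mathcal{I}$-closed set $C\subseteq{}^{\kappa}\kappa$, i.e. there is an $\mathcal{I}$-continuous function $\Phi$ defined on $C$ (with the subspace topology) that is injective and satisfies $\Phi(C)=A$.
   Context: For $\mu\in\{2,\kappa\}$, ${}^{\kappa}\mu$ is the set of functions $\kappa\to\mu$ with the topology $\tau_{\mathcal{I}}$ generated by the sets $\mathbf{N}_f=\{x:f\subseteq x\}$ for $f\colon D\to\mu$, $D\in\mathcal{I}$. $\mathcal{I}$-continuous means continuous with respect to these topologies; $\mathcal{I}$-closed means $\tau_{\mathcal{I}}$-closed. In (1), $A$ being an $\mathcal{I}$-continuous image of ${}^{\kappa}\kappa$ means there is an $\mathcal{I}$-continuous surjection ${}^{\kappa}\kappa\to A$. *)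

(* The cardinal kappa is represented by a type K carrying a strict well-order
   lt; elements of K are the ordinals below kappa. Subsets of K are K -> Prop. *)

Section Defs.
Context {K : Type} (lt : K -> K -> Prop).

Definition strict_wellorder : Prop :=
  (forall a, ~ lt a a) /\
  (forall a b c, lt a b -> lt b c -> lt a c) /\
  (forall a b, lt a b \/ a = b \/ lt b a) /\
  well_founded lt.

Definition card_lt_kappa (J : Type) : Prop :=
  exists (alpha : K) (f : J -> K),
    (forall i j, f i = f j -> i = j) /\ (forall j, lt (f j) alpha).

Definition bounded (X : K -> Prop) : Prop :=
  exists beta : K, forall x, X x -> lt x beta.

Definition uncountable_regular_cardinal : Prop :=
  strict_wellorder /\
  (* kappa is a cardinal: not of size < kappa *)
  ~ card_lt_kappa K /\
  ~ (exists f : K -> nat, forall a b, f a = f b -> a = b) /\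
  (forall X : K -> Prop, card_lt_kappa {x : K | X x} -> bounded X).

Definition kappa_complete_proper_ideal (I : (K -> Prop) -> Prop) : Prop :=
  (forall A B : K -> Prop, I B -> (forall x, A x -> B x) -> I A) /\
  (forall A B : K -> Prop, I A -> I B -> I (fun x => A x \/ B x)) /\
  (forall (J : Type) (F : J -> K -> Prop),
      card_lt_kappa J -> (forall j, I (F j)) -> I (fun x => exists j, F j x)) /\
  ~ I (fun _ => True).

End Defs.

(* codomain of the space ^kappa nu : nu = true means 2 (bool), nu = false means kappa *)
Definition nu_type (K : Type) (nu : bool) : Type := if nu then bool else K.

Section Topology.
Context {K : Type} (I : (K -> Prop) -> Prop).

(* open in tau_I: union of basic sets N_f = {x | f ⊆ x}, dom f ∈ I *)
Definition I_open {M : Type} (U : (K -> M) -> Prop) : Prop :=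
  forall x, U x -> exists D : K -> Prop, I D /\
    forall y : K -> M, (forall d, D d -> y d = x d) -> U y.

Definition I_closed {M : Type} (C : (K -> M) -> Prop) : Prop :=
  I_open (fun x => ~ C x).

(* Phi restricted to C (subspace topology) is continuous into (K -> N, tau_I) *)
Definition I_continuous_on {M N : Type} (C : (K -> M) -> Prop)
    (Phi : (K -> M) -> (K -> N)) : Prop :=
  forall V : (K -> N) -> Prop, I_open V ->
    exists U : (K -> M) -> Prop, I_open U /\
      forall x, C x -> (V (Phi x) <-> U x).
End Topology.

(* Fix X in I unbounded in kappa. By regularity X has order type kappa, so some
   injection g : kappa -> kappa takes values in X. Reading x along g,
   x |-> (alpha |-> x (g alpha)) (decoded into nu), gives a surjection
   ^kappa kappa -> ^kappa nu that depends only on x restricted to X, hence is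
   I-continuous, since X itself is in I. Composing with a retraction onto A gives
   (1). For (2), take C to be the image of A under the canonical section of this
   surjection, which is constant outside the range of g: it is I-closed because
   singletons and X are in I. *)

From Stdlib Require Import Classical ClassicalEpsilon FunctionalExtensionality.

Lemma injective_retraction {A B : Type} (f : A -> B) :
  inhabited A -> (forall a b, f a = f b -> a = b) ->
  exists r : B -> A, forall a, r (f a) = a.
Proof.
  intros inhA f_inj.
  exists (fun y => epsilon inhA (fun a => f a = y)); intro a.
  apply f_inj, (epsilon_spec inhA (fun a' => f a' = f a)).
  now exists a.
Qed.

Section Regular.
Variables (K : Type) (lt : K -> K -> Prop).
Hypothesis lt_irrefl : forall a, ~ lt a a.
Hypothesis lt_trans : forall a b c, lt a b -> lt b c -> lt a c.
Hypothesis lt_total : forall a b, lt a b \/ a = b \/ lt b a.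
Hypothesis lt_wf : well_founded lt.
Hypothesis regular :
  forall X : K -> Prop, card_lt_kappa lt {x : K | X x} -> bounded lt X.

Lemma bounded_image_initial_segment (f : K -> K) (a : K) :
  bounded lt (fun y => exists b, lt b a /\ f b = y).
Proof.
  apply regular. exists a.
  exists (fun y : {y | exists b, lt b a /\ f b = y} =>
            proj1_sig (constructive_indefinite_description _ (proj2_sig y))).
  split.
  - intros [y1 p1] [y2 p2]; simpl.
    pose proof (proj2 (proj2_sig (constructive_indefinite_description _ p1))) as e1.
    pose proof (proj2 (proj2_sig (constructive_indefinite_description _ p2))) as e2.
    simpl in e1, e2. intro same_b. rewrite same_b in e1.
    assert (y1 = y2) as <- by congruence.
    f_equal; apply proof_irrelevance.
  - intros [y p]; simpl.
    exact (proj1 (proj2_sig (constructive_indefinite_description _ p))).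
Qed.

Lemma singleton_bounded (k0 k1 : K) (j : K) :
  lt k0 k1 -> bounded lt (fun d => d = j).
Proof.
  intro k01. apply regular. exists k1, (fun _ => k0). split; [|easy].
  intros [a pa] [b pb] _. subst. reflexivity.
Qed.

Section Enumeration.
Variable X : K -> Prop.
Hypothesis X_unbounded : ~ bounded lt X.

Lemma unbounded_not_below (beta : K) : exists x, X x /\ ~ lt x beta.
Proof.
  apply NNPP; intro none. apply X_unbounded. exists beta; intros x Xx.
  apply NNPP; intro. apply none. now exists x.
Qed.

(* [inhabits a] makes a nonemptiness hypothesis on K unnecessary. *)
Definition enum_step (a : K) (rec : forall b, lt b a -> K) : K :=
  epsilon (inhabits a) (fun x => X x /\ forall b (h : lt b a), lt (rec b h) x).

Definition enum : K -> K := Fix lt_wf (fun _ => K) enum_step.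

Lemma enum_eq (a : K) :
  enum a = epsilon (inhabits a) (fun x => X x /\ forall b, lt b a -> lt (enum b) x).
Proof.
  unfold enum at 1; rewrite Fix_eq; [reflexivity|].
  intros x f f' ff'. unfold enum_step.
  replace f' with f; [reflexivity|].
  apply functional_extensionality_dep; intro y.
  apply functional_extensionality_dep; intro p. apply ff'.
Qed.

Lemma enum_spec (a : K) : X (enum a) /\ forall b, lt b a -> lt (enum b) (enum a).
Proof.
  rewrite (enum_eq a). apply epsilon_spec.
  destruct (bounded_image_initial_segment enum a) as [beta below].
  destruct (unbounded_not_below beta) as [x [Xx x_ge]].
  exists x; split; [exact Xx|]. intros b hb.
  assert (enum_b_below : lt (enum b) beta) by (apply below; now exists b).
  destruct (lt_total x beta) as [h | [-> | h]]; [contradiction | exact enum_b_below|].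
  eauto.
Qed.

Lemma enum_inj (a b : K) : enum a = enum b -> a = b.
Proof.
  intro e. destruct (lt_total a b) as [h | [h | h]]; [| exact h |].
  - apply (proj2 (enum_spec b)) in h. rewrite e in h. now apply lt_irrefl in h.
  - apply (proj2 (enum_spec a)) in h. rewrite e in h. now apply lt_irrefl in h.
Qed.

End Enumeration.

Lemma unbounded_embedding (X : K -> Prop) :
  ~ bounded lt X ->
  exists g : K -> K, (forall a, X (g a)) /\ (forall a b, g a = g b -> a = b).
Proof.
  intro X_unbounded. exists (enum X).
  split; [intro a; apply (enum_spec X X_unbounded) | apply (enum_inj X X_unbounded)].
Qed.

End Regular.

Lemma uncountable_has_lt {K : Type} (lt : K -> K -> Prop) :
  (forall a b, lt a b \/ a = b \/ lt b a) ->
  ~ (exists f : K -> nat, forall a b, f a = f b -> a = b) ->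
  exists a b, lt a b.
Proof.
  intros lt_total uncountable.
  apply NNPP; intro no_lt. apply uncountable.
  exists (fun _ => 0); intros a b _.
  destruct (lt_total a b) as [h | [h | h]]; [| exact h |]; exfalso; eauto.
Qed.

Lemma nu_type_retract {K : Type} (k0 k1 : K) (nu : bool) :
  k0 <> k1 ->
  exists (c : nu_type K nu -> K) (r : K -> nu_type K nu), forall v, r (c v) = v.
Proof.
  intro k01. destruct nu; simpl.
  - exists (fun b : bool => if b then k1 else k0).
    apply injective_retraction; [exact (inhabits true)|].
    intros [] [] e; congruence.
  - now exists (fun k => k), (fun k => k).
Qed.

Section Topology.
Variables (K : Type) (I : (K -> Prop) -> Prop).

Lemma I_continuous_on_local {M N : Type} (C : (K -> M) -> Prop)
    (Phi : (K -> M) -> (K -> N)) (D : K -> Prop) :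
  I D -> (forall x y, (forall d, D d -> y d = x d) -> Phi y = Phi x) ->
  I_continuous_on I C Phi.
Proof.
  intros ID Phi_local V _. exists (fun x => V (Phi x)). split; [|tauto].
  intros x Vx. exists D; split; [exact ID|].
  intros y agree. now rewrite (Phi_local x y agree).
Qed.

Section Transfer.
Variables (M N : Type).
Hypothesis I_singleton : forall j : K, I (fun d => d = j).
Variable X : K -> Prop.
Hypothesis I_X : I X.
Variables (g gr : K -> K).
Hypothesis g_in_X : forall k, X (g k).
Hypothesis gr_g : forall k, gr (g k) = k.
Variables (c : N -> M) (cr : M -> N).
Hypothesis cr_c : forall v, cr (c v) = v.
Variable m0 : M.

Definition extract (x : K -> M) : K -> N := fun k => cr (x (g k)).

Definition embed (w : K -> N) : K -> M := fun j =>
  if excluded_middle_informative (exists k, g k = j) then c (w (gr j)) else m0.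

Lemma extract_embed (w : K -> N) : extract (embed w) = w.
Proof.
  apply functional_extensionality; intro k. unfold extract, embed.
  destruct (excluded_middle_informative (exists k', g k' = g k)) as [_ | no].
  - now rewrite gr_g, cr_c.
  - exfalso; eauto.
Qed.

Lemma extract_local (x y : K -> M) :
  (forall d, X d -> y d = x d) -> extract y = extract x.
Proof.
  intro agree. apply functional_extensionality; intro k. unfold extract.
  now rewrite agree.
Qed.

Lemma embed_image_closed (A : (K -> N) -> Prop) :
  I_closed I (fun x => exists w, A w /\ x = embed w).
Proof.
  intros x x_notin.
  destruct (classic (exists j, ~ (exists k, g k = j) /\ x j <> m0))
    as [[j [j_off xj]] | off_range_m0].
  - exists (fun d => d = j); split; [apply I_singleton|].
    intros y agree [w [_ ->]]. apply xj. rewrite <- agree by reflexivity.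
    unfold embed. now destruct (excluded_middle_informative (exists k, g k = j)).
  - exists X; split; [exact I_X|].
    intros y agree [w [Aw ->]]. apply x_notin. exists w; split; [exact Aw|].
    apply functional_extensionality; intro j.
    destruct (classic (exists k, g k = j)) as [[k <-] | j_off].
    + symmetry. apply agree, g_in_X.
    + unfold embed. destruct (excluded_middle_informative (exists k, g k = j)); [tauto|].
      apply NNPP; intro. apply off_range_m0. eauto.
Qed.

Theorem continuous_surjection_onto (A : (K -> N) -> Prop) (a0 : K -> N) :
  A a0 ->
  exists Phi : (K -> M) -> (K -> N),
    I_continuous_on I (fun _ => True) Phi /\ (forall y, A y <-> exists x, Phi x = y).
Proof.
  intro A_a0.
  exists (fun x => if excluded_middle_informative (A (extract x)) then extract x else a0).
  split.
  - apply I_continuous_on_local with X; [exact I_X|].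
    intros x y agree. now rewrite (extract_local x y agree).
  - intro y; split.
    + intro Ay. exists (embed y). rewrite extract_embed.
      now destruct (excluded_middle_informative (A y)).
    + intros [x <-]. now destruct (excluded_middle_informative (A (extract x))).
Qed.

Theorem continuous_bijection_from_closed (A : (K -> N) -> Prop) :
  exists C : (K -> M) -> Prop, I_closed I C /\
  exists Phi : (K -> M) -> (K -> N),
    I_continuous_on I C Phi /\
    (forall x1 x2, C x1 -> C x2 -> Phi x1 = Phi x2 -> x1 = x2) /\
    (forall y, A y <-> exists x, C x /\ Phi x = y).
Proof.
  exists (fun x => exists w, A w /\ x = embed w).
  split; [apply embed_image_closed|].
  exists extract. split; [|split].
  - apply I_continuous_on_local with X; [exact I_X | exact extract_local].
  - intros x1 x2 [w1 [_ ->]] [w2 [_ ->]]. rewrite !extract_embed. now intros ->.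
  - intro y; split.
    + intro Ay. exists (embed y). split; [eauto | apply extract_embed].
    + intros [x [[w [Aw ->]] <-]]. now rewrite extract_embed.
Qed.

End Transfer.
End Topology.

Theorem proposition5p5 (K : Type) (lt : K -> K -> Prop) (I : (K -> Prop) -> Prop) :
  uncountable_regular_cardinal lt ->
  kappa_complete_proper_ideal lt I ->
  (forall X : K -> Prop, bounded lt X -> I X) ->
  (exists X : K -> Prop, I X /\ ~ bounded lt X) ->
  forall nu : bool,
    (forall A : (K -> nu_type K nu) -> Prop, (exists a, A a) ->
       exists Phi : (K -> K) -> (K -> nu_type K nu),
         I_continuous_on I (fun _ => True) Phi /\
         (forall y, A y <-> exists x, Phi x = y)) /\
    (forall A : (K -> nu_type K nu) -> Prop,
       exists C : (K -> K) -> Prop, I_closed I C /\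
       exists Phi : (K -> K) -> (K -> nu_type K nu),
         I_continuous_on I C Phi /\
         (forall x1 x2, C x1 -> C x2 -> Phi x1 = Phi x2 -> x1 = x2) /\
         (forall y, A y <-> exists x, C x /\ Phi x = y)).
Proof.
  intros [[lt_irrefl [lt_trans [lt_total lt_wf]]] [_ [uncountable regular]]]
    _ I_bounded [X [I_X X_unbounded]] nu.
  destruct (uncountable_has_lt lt lt_total uncountable) as [k0 [k1 k01]].
  assert (I_singleton : forall j, I (fun d => d = j))
    by (intro j; apply I_bounded, (singleton_bounded K lt regular k0 k1 j k01)).
  destruct (unbounded_embedding K lt lt_irrefl lt_trans lt_total lt_wf regular X X_unbounded)
    as [g [g_in_X g_inj]].
  destruct (injective_retraction g (inhabits k0) g_inj) as [gr gr_g].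
  assert (k0_neq_k1 : k0 <> k1) by (intros <-; exact (lt_irrefl k0 k01)).
  destruct (nu_type_retract k0 k1 nu k0_neq_k1) as [c [cr cr_c]].
  split.
  - intros A [a0 A_a0].
    exact (continuous_surjection_onto K I K _ X I_X g gr g_in_X gr_g c cr cr_c k0 A a0 A_a0).
  - intro A.
    exact (continuous_bijection_from_closed K I K _ I_singleton X I_X g gr g_in_X gr_g
             c cr cr_c k0 A).
Qed.
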